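(* Let $n\ge4$ be even, $p\ge n+1$ an integer, $c_1$ a positive integer, $a_k=pc_k$, $c_{k+1}=p^2c_k$, $\Theta_k=\Theta_{a_k,c_k}$, and $b_{k,i}=|\Theta_1\cdots\Theta_ke_i|$. Then for every $k\ge1$, $$\prod_{j=1}^{k-1}c_j<b_{k,1}<\prod_{j=1}^k 2a_j,\qquad \prod_{j=1}^{k}c_j<b_{k,n}<\prod_{j=1}^k 2a_j.$$
   Context: For positive integers $a,c$, $\Theta_{a,c}$ is the $n\times n$ matrix with row $1=(1,c,\dots,c)$, row $n=(1,c+1,\dots,c+1)$, and for $1\le i\le(n-2)/2$: row $2i$ has $0$ in column 1, $2$ in columns $2i$ and $2i+1$, and $1$ in the other columns among $2,\dots,n$; row $2i+1$ has $a$ in column $2i$, $a+1$ in column $2i+1$, $0$ elsewhere. For a vector $v$, $|v|$ is the sum of its entries; $e_i$ is the $i$-th standard basis vector. *)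

From mathcomp Require Import all_boot all_order all_algebra.
Set Implicit Arguments. Unset Strict Implicit. Unset Printing Implicit Defensive.
Import GRing.Theory.

(* Entry (r, s) of Theta_{a,c} in 1-based indexing (r, s in 1..n), as in the paper. *)
Definition theta_entry (n a c r s : nat) : nat :=
  if r == 1 then (if s == 1 then 1 else c)
  else if r == n then (if s == 1 then 1 else c.+1)
  else if ~~ odd r then
    (if s == 1 then 0 else if (s == r) || (s == r.+1) then 2 else 1)
  else
    (if s == r.-1 then a else if s == r then a.+1 else 0).

Definition Theta (n a c : nat) : 'M[nat]_n :=
  \matrix_(i < n, j < n) theta_entry n a c i.+1 j.+1.

(* |M e_j| : sum of the entries of column j of M. *)
Definition colsum {n : nat} (M : 'M[nat]_n) (j : 'I_n) : nat :=
  \sum_(r < n) M r j.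

Definition bcoef {n : nat} (a c : nat -> nat) (k : nat) (j : 'I_n) : nat :=
  colsum (\prod_(1 <= l < k.+1) Theta n (a l) (c l))%R j.

From mathcomp Require Import all_boot all_order all_algebra zify.
Set Implicit Arguments. Unset Strict Implicit. Unset Printing Implicit Defensive.

(* Write b_k for the row of column sums of Theta_1 ... Theta_k, so that
   b_(k+1) = b_k Theta_(k+1).  Column 1 of Theta_{a,c} has its ones in rows 1
   and n, hence b_(k+1),1 = b_k,1 + b_k,n; column n has c and c+1 in rows 1
   and n and entries at most 1 elsewhere, hence
   (c+1) b_k,n <= b_(k+1),n <= (n + 2c) max b_k; and every column sums to at
   most 2n + 2c + a + 1.  Since a_k = p c_k and c_k >= p^2 for k >= 2, these
   estimates give max b_k <= 2 prod_(j<=k) 2a_j by induction (the first step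
   uses the exact row b_0 = (1, ..., 1), as c_1 may be small), and the four
   bounds follow from the recursions for b_k,1 and b_k,n. *)

Lemma colsum1 n (j : 'I_n) : colsum (1%R : 'M[nat]_n) j = 1.
Proof.
rewrite /colsum (bigD1 j) //= big1 => [|i /negbTE ne_ij]; rewrite !mxE ?eqxx //.
by rewrite ne_ij.
Qed.

Lemma colsumM n (A B : 'M[nat]_n) j :
  colsum (A * B)%R j = \sum_(t < n) colsum A t * B t j.
Proof.
rewrite /colsum -mulmxE; under eq_bigr do rewrite mxE.
by rewrite exchange_big; apply: eq_bigr => t _; rewrite big_distrl.
Qed.

Lemma colsumM_le n (A B : 'M[nat]_n) m j :
  (forall t, colsum A t <= m) -> colsum (A * B)%R j <= m * colsum B j.
Proof.
move=> le_Am; rewrite colsumM [colsum B j]/colsum big_distrr /=.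
by apply: leq_sum => t _; apply: leq_mul.
Qed.

Lemma sum_mul_eqn n (F : 'I_n -> nat) (i : 'I_n) m :
  i = m :> nat -> \sum_(t < n) F t * (t == m :> nat) = F i.
Proof.
move=> <-; rewrite (bigD1 i) //= eqxx muln1 big1 ?addn0 // => t ne_ti.
by rewrite (inj_eq val_inj) (negbTE ne_ti) muln0.
Qed.

Lemma sum_eqn_mul_le n m x : \sum_(t < n) (t == m :> nat) * x <= x.
Proof.
case: (ltnP m n) => [lt_mn | le_nm].
  by under eq_bigr do rewrite mulnC; rewrite (sum_mul_eqn _ (i := Ordinal lt_mn)).
rewrite big1 // => t _; suff /negbTE-> : val t != m by [].
by rewrite neq_ltn (leq_trans (ltn_ord t)).
Qed.

Lemma ltn_mul_succl x y z : 0 < x -> x <= y -> x * z < z.+1 * y.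
Proof. by move=> x_gt0 le_xy; nia. Qed.

Lemma colsum_slack_base n p c : n < p -> 0 < c ->
  2 * n + 2 * c + (p * c).+1 <= 2 * (2 * (p * c)).
Proof. by move=> lt_np c_gt0; nia. Qed.

Lemma colsum_slack n p c : 1 < n -> n < p -> p ^ 2 <= c ->
  2 * n + 2 * c + (p * c).+1 <= 2 * (p * c).
Proof.
move=> n_gt1 lt_np le_p2c.
have : 3 * c <= p * c by apply: leq_mul => //; lia.
have : 3 * p <= p ^ 2 by apply: leq_mul => //; lia.
lia.
Qed.

Lemma last_colsum_slack_base n p c : 0 < n -> n < p -> 0 < c ->
  n + 2 * c < 2 * (p * c).
Proof.
move=> n_gt0 lt_np c_gt0.
have : n.+1 * c <= p * c by rewrite leq_mul2r lt_np orbT.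
nia.
Qed.

Lemma last_colsum_slack n p c : 1 < n -> n < p -> p ^ 2 <= c -> n + 2 * c < p * c.
Proof. by move=> n_gt1 lt_np le_p2c; have := colsum_slack n_gt1 lt_np le_p2c; lia. Qed.

Section ThetaColumns.
Variables (n a c : nat).

Lemma Theta_first_col (e1 t : 'I_n) : 1 < n -> e1 = 0 :> nat ->
  Theta n a c t e1 = (t == 0 :> nat) + (t == n.-1 :> nat).
Proof.
move=> n_gt1 e1_first; rewrite mxE e1_first /theta_entry.
by have := ltn_ord t; repeat case: ifP; lia.
Qed.

Lemma Theta_last_col_le (en t : 'I_n) : ~~ odd n -> en = n.-1 :> nat ->
  Theta n a c t en <= 1 + (t == 0 :> nat) * c + (t == n.-1 :> nat) * c.
Proof.
move=> n_even en_last; rewrite mxE en_last /theta_entry.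
by have := ltn_ord t; repeat case: ifP; lia.
Qed.

Lemma Theta_last_last (en : 'I_n) : 1 < n -> en = n.-1 :> nat ->
  Theta n a c en en = c.+1.
Proof.
by move=> n_gt1 en_last; rewrite mxE en_last /theta_entry; repeat case: ifP; lia.
Qed.

Lemma Theta_le t j : Theta n a c t j <=
  2 + (t == 0 :> nat) * c + (t == n.-1 :> nat) * c + (t == j + odd j :> nat) * a.+1.
Proof.
by rewrite mxE /theta_entry; have := ltn_ord t; have := ltn_ord j; repeat case: ifP; lia.
Qed.

Lemma colsum_Theta_le j : colsum (Theta n a c) j <= 2 * n + 2 * c + a.+1.
Proof.
rewrite /colsum; apply: leq_trans (leq_sum _ (fun t (_ : true) => Theta_le t j)) _.
rewrite !big_split /= sum_nat_const card_ord mulnC.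
apply: leq_trans (leq_add (leq_add (leq_add (leqnn _)
  (sum_eqn_mul_le _ _ _)) (sum_eqn_mul_le _ _ _)) (sum_eqn_mul_le _ _ _)) _.
lia.
Qed.

Lemma colsum_Theta_last_le (en : 'I_n) : ~~ odd n -> en = n.-1 :> nat ->
  colsum (Theta n a c) en <= n + 2 * c.
Proof.
move=> n_even en_last; rewrite /colsum.
apply: leq_trans (leq_sum _ (fun t (_ : true) => Theta_last_col_le t n_even en_last)) _.
rewrite !big_split /= sum1_card card_ord.
apply: leq_trans (leq_add (leq_add (leqnn _)
  (sum_eqn_mul_le _ _ _)) (sum_eqn_mul_le _ _ _)) _.
lia.
Qed.

Lemma colsumM_Theta_first (e1 en : 'I_n) (A : 'M[nat]_n) : 1 < n ->
  e1 = 0 :> nat -> en = n.-1 :> nat ->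
  colsum (A * Theta n a c)%R e1 = colsum A e1 + colsum A en.
Proof.
move=> n_gt1 e1_first en_last; rewrite colsumM.
under eq_bigr do rewrite (Theta_first_col _ n_gt1 e1_first) mulnDr.
by rewrite big_split /= (sum_mul_eqn _ e1_first) (sum_mul_eqn _ en_last).
Qed.

Lemma colsumM_Theta_last_ge (en : 'I_n) (A : 'M[nat]_n) : 1 < n ->
  en = n.-1 :> nat -> c.+1 * colsum A en <= colsum (A * Theta n a c)%R en.
Proof.
move=> n_gt1 en_last; rewrite colsumM (bigD1 en) //=.
by rewrite Theta_last_last // mulnC leq_addr.
Qed.

End ThetaColumns.

Section Growth.
Variables (n : nat) (a c : nat -> nat) (e1 en : 'I_n).
Hypotheses (n_gt1 : 1 < n) (n_even : ~~ odd n).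
Hypotheses (e1_first : e1 = 0 :> nat) (en_last : en = n.-1 :> nat).

Local Notation b := (@bcoef n a c).
Local Notation C k := (\prod_(1 <= j < k.+1) c j).
Local Notation M k := (\prod_(1 <= j < k.+1) (2 * a j)).

Lemma bcoef0 t : b 0 t = 1.
Proof. by rewrite /bcoef big_geq // colsum1. Qed.

Lemma bcoefS k t : b k.+1 t =
  colsum ((\prod_(1 <= l < k.+1) Theta n (a l) (c l)) * Theta n (a k.+1) (c k.+1))%R t.
Proof. by rewrite /bcoef big_nat_recr. Qed.

Lemma bcoefS_first k : b k.+1 e1 = b k e1 + b k en.
Proof. by rewrite bcoefS (colsumM_Theta_first _ _ _ n_gt1 e1_first en_last). Qed.

Lemma bcoefS_last_ge k : (c k.+1).+1 * b k en <= b k.+1 en.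
Proof. by rewrite bcoefS colsumM_Theta_last_ge. Qed.

Lemma bcoefS_le k m t : (forall s, b k s <= m) ->
  b k.+1 t <= m * (2 * n + 2 * c k.+1 + (a k.+1).+1).
Proof.
move=> le_bm; rewrite bcoefS; apply: leq_trans (colsumM_le _ _ le_bm) _.
by rewrite leq_mul2l colsum_Theta_le orbT.
Qed.

Lemma bcoefS_last_le k m : (forall s, b k s <= m) ->
  b k.+1 en <= m * (n + 2 * c k.+1).
Proof.
move=> le_bm; rewrite bcoefS; apply: leq_trans (colsumM_le _ _ le_bm) _.
by rewrite leq_mul2l colsum_Theta_last_le ?orbT.
Qed.

Lemma bcoef_first_gt0 k : 0 < b k e1.
Proof. by elim: k => [|k IH]; rewrite ?bcoef0 // bcoefS_first ltn_addr. Qed.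

Lemma prod_c_le_bcoef_last k : C k <= b k en.
Proof.
elim: k => [|k IH]; first by rewrite big_geq // bcoef0.
rewrite big_nat_recr //=; apply: leq_trans (bcoefS_last_ge k).
by rewrite mulnC leq_mul.
Qed.

Lemma prod_c_lt_bcoef_first k : C k < b k.+1 e1.
Proof. by rewrite bcoefS_first -add1n leq_add ?bcoef_first_gt0 ?prod_c_le_bcoef_last. Qed.

Variable p : nat.
Hypotheses (p_gt_n : n < p) (c1_gt0 : 0 < c 1).
Hypotheses (a_def : forall k, 1 <= k -> a k = p * c k).
Hypotheses (c_rec : forall k, 1 <= k -> c k.+1 = p ^ 2 * c k).

Lemma c_gt0 k : 0 < k -> 0 < c k.
Proof.
elim: k => [//|[//|k] IH _].
by rewrite c_rec // muln_gt0 IH // expn_gt0 (leq_trans _ p_gt_n).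
Qed.

Lemma c_ge_sq k : 1 < k -> p ^ 2 <= c k.
Proof. by case: k => [//|[//|k]] _; rewrite c_rec // leq_pmulr ?c_gt0. Qed.

Lemma a_gt2 k : 0 < k -> 2 < a k.
Proof.
move=> k_gt0; rewrite a_def //; apply: leq_trans (leq_ltn_trans n_gt1 p_gt_n) _.
by rewrite leq_pmulr ?c_gt0.
Qed.

Lemma prod_c_gt0 k : 0 < C k.
Proof.
rewrite big_nat_cond prodn_cond_gt0 // => j /andP[/andP[j_ge1 _] _].
exact: c_gt0.
Qed.

Lemma prod_2a_gt0 k : 0 < M k.
Proof.
rewrite big_nat_cond prodn_cond_gt0 // => j /andP[/andP[j_ge1 _] _].
by rewrite muln_gt0 (ltn_trans _ (a_gt2 j_ge1)).
Qed.

Lemma prod_c_lt_bcoef_last k : C k.+1 < b k.+1 en.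
Proof.
rewrite big_nat_recr //=; apply: leq_trans (bcoefS_last_ge k).
by rewrite ltn_mul_succl ?prod_c_gt0 ?prod_c_le_bcoef_last.
Qed.

Lemma bcoef_le k t : b k t <= 2 * M k.
Proof.
elim: k t => [|k IH] t; first by rewrite bcoef0 big_geq.
rewrite big_nat_recr //= a_def //; case: k IH => [|k] IH.
  apply: leq_trans (bcoefS_le (m := 1) _ _) _ => [s|]; first by rewrite bcoef0.
  by rewrite big_geq // a_def // !mul1n colsum_slack_base.
apply: leq_trans (bcoefS_le _ IH) _; rewrite a_def // mulnA leq_mul2l.
by rewrite colsum_slack ?c_ge_sq ?orbT.
Qed.

Lemma bcoef_first_lt k : b k.+1 e1 < M k.+1.
Proof.
rewrite bcoefS_first big_nat_recr //=.
apply: leq_ltn_trans (leq_add (bcoef_le k e1) (bcoef_le k en)) _.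
by rewrite addnn -mul2n mulnCA ltn_pmul2l // mulnC ltn_pmul2l ?prod_2a_gt0 ?a_gt2.
Qed.

Lemma bcoef_last_lt k : b k.+1 en < M k.+1.
Proof.
rewrite big_nat_recr //= a_def //; case: k => [|k].
  apply: leq_ltn_trans (bcoefS_last_le (m := 1) _) _ => [s|]; first by rewrite bcoef0.
  by rewrite big_geq // !mul1n last_colsum_slack_base // ltnW.
apply: leq_ltn_trans (bcoefS_last_le (bcoef_le k.+1)) _.
rewrite -mulnA mulnCA ltn_mul2l prod_2a_gt0 /= ltn_pmul2l //.
by rewrite last_colsum_slack ?c_ge_sq.
Qed.

End Growth.

Theorem mainTheorem11 (n p : nat) (a c : nat -> nat) (e1 en : 'I_n) :
  4 <= n -> ~~ odd n -> n.+1 <= p ->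
  0 < c 1 ->
  (forall k, 1 <= k -> a k = p * c k) ->
  (forall k, 1 <= k -> c k.+1 = p ^ 2 * c k) ->
  nat_of_ord e1 = 0 -> nat_of_ord en = n.-1 ->
  forall k, 1 <= k ->
    [/\ \prod_(1 <= j < k) c j < bcoef a c k e1,
        bcoef a c k e1 < \prod_(1 <= j < k.+1) (2 * a j),
        \prod_(1 <= j < k.+1) c j < bcoef a c k en
      & bcoef a c k en < \prod_(1 <= j < k.+1) (2 * a j)].
Proof.
move=> n_ge4 n_even p_gt_n c1_gt0 a_def c_rec e1_first en_last [//|k] _.
have n_gt1 : 1 < n by apply: leq_trans n_ge4.
split.
- exact (prod_c_lt_bcoef_first a c n_gt1 e1_first en_last k).
- exact (bcoef_first_lt n_gt1 e1_first en_last p_gt_n c1_gt0 a_def c_rec k).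
- exact (prod_c_lt_bcoef_last a n_gt1 en_last p_gt_n c1_gt0 c_rec k).
- exact (bcoef_last_lt n_gt1 n_even en_last p_gt_n c1_gt0 a_def c_rec k).
Qed.
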